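(* Let $\mathcal H_A,\mathcal H_B$ be finite-dimensional Hilbert spaces, $|0_A\rangle\in\mathcal H_A$, $|0_B\rangle\in\mathcal H_B$ unit vectors, $|0\rangle=|0_A\rangle\otimes|0_B\rangle$, and let $|\phi\rangle\in\mathcal H_A\otimes\mathcal H_B$ be a unit vector (e.g. $|\phi\rangle=O(t)|0\rangle$ for a unitary $O(t)$). Decompose $|\phi\rangle=|x\rangle\otimes|0_B\rangle+|y\rangle$, where $|x\rangle=(\mathbb 1_A\otimes\langle 0_B|)|\phi\rangle\in\mathcal H_A$ and $(\mathbb 1_A\otimes\langle 0_B|)|y\rangle=0$. Fix $0<\epsilon<1$ and let $|\psi\rangle=(|0\rangle+\epsilon|\phi\rangle)/\sqrt{\mathcal N}$ with $\mathcal N=1+\epsilon^2+2\epsilon\,\mathrm{Re}\langle 0|\phi\rangle$, and $\rho_A=\operatorname{tr}_B|\psi\rangle\langle\psi|$. Set $\mu=\epsilon^2\langle y|y\rangle/\mathcal N$. Then $\mu\le\epsilon^2$, and for every $\alpha>1$, $$S_\alpha(\rho_A)\le \frac{\alpha}{\alpha-1}\log\frac{1}{1-\mu}\le\frac{\alpha}{\alpha-1}\log\frac{1}{1-\epsilon^2}.$$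
   Context: For a density matrix $\rho$, the Rényi entropy is $S_\alpha(\rho)=\frac{1}{1-\alpha}\log\operatorname{tr}\rho^\alpha$. One has $\rho_A=(1-\mu)|v\rangle\langle v|+\mu\,\omega$ with $|v\rangle=(|0_A\rangle+\epsilon|x\rangle)/\sqrt{\mathcal N(1-\mu)}$ a unit vector and $\omega=\operatorname{tr}_B|y\rangle\langle y|/\langle y|y\rangle$ (when $|y\rangle\neq 0$). *)

From mathcomp Require Import all_boot all_algebra spectral sesquilinear.
From mathcomp Require Import complex.
From mathcomp Require Import reals exp.
Set Implicit Arguments. Unset Strict Implicit. Unset Printing Implicit Defensive.
Import GRing.Theory Num.Theory.
Local Open Scope ring_scope.

Section QDefs.
Variable R : realType.
Local Notation C := R[i].

(* A vector of H_A = C^dA is a row vector 'rV[C]_dA.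
   A vector of H_A (x) H_B = C^dA (x) C^dB is represented by its coefficient
   array 'M[C]_(dA, dB):  |v> = sum_{a,b} v a b |a> (x) |b>. *)

Definition innerA dA (u v : 'rV[C]_dA) : C := \sum_i (u 0 i)^* * v 0 i.
Definition innerAB dA dB (u v : 'M[C]_(dA, dB)) : C :=
  \sum_i \sum_j (u i j)^* * v i j.

Definition tens dA dB (a : 'rV[C]_dA) (b : 'rV[C]_dB) : 'M[C]_(dA, dB) :=
  \matrix_(i, j) (a 0 i * b 0 j).

Definition contrB dA dB (b : 'rV[C]_dB) (v : 'M[C]_(dA, dB)) : 'rV[C]_dA :=
  \row_i \sum_j (b 0 j)^* * v i j.

(* tr_B |v><v| ,  entries  (i,i') = sum_j v_{ij} conj(v_{i'j}) *)
Definition ptraceB dA dB (v : 'M[C]_(dA, dB)) : 'M[C]_dA :=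
  \matrix_(i, i') \sum_j v i j * (v i' j)^*.

(* tr rho^alpha for a Hermitian (PSD) matrix, via its spectral decomposition
   rho = U^-1 diag(lambda) U : tr rho^alpha = sum_i lambda_i^alpha *)
Definition trpow n (rho : 'M[C]_n) (alpha : R) : R :=
  \sum_i (complex.Re (spectral_diag rho 0 i)) `^ alpha.

Definition renyi n (alpha : R) (rho : 'M[C]_n) : R :=
  (1 - alpha)^-1 * ln (trpow rho alpha).

End QDefs.

(* The largest eigenvalue of rho_A is at least 1 - mu.  Indeed psi is, up to the factor
   1/sqrt N, the sum of |u> (x) |0_B> with u = 0_A + eps x and of eps |y>, which has no
   |0_B> component; the Rayleigh quotient of rho_A at u is therefore at least
   <u|u> / N = 1 - mu.  Then tr rho_A^alpha >= (1 - mu)^alpha, and dividing the logarithm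
   by 1 - alpha < 0 gives the first bound; the second one is monotonicity in mu <= eps^2. *)
From mathcomp Require Import all_boot all_order all_algebra spectral sesquilinear.
From mathcomp Require Import complex.
From mathcomp Require Import reals exp.
From mathcomp Require Import ring lra.
Set Implicit Arguments. Unset Strict Implicit. Unset Printing Implicit Defensive.
Import Order.TTheory GRing.Theory Num.Theory.
Local Open Scope complex_scope.
Local Open Scope ring_scope.

Section ComplexRe.
Variable R : rcfType.
Implicit Types z w : R[i].

Lemma ReD z w : complex.Re (z + w) = complex.Re z + complex.Re w.
Proof. by case: z; case: w. Qed.

Lemma Re_sum (I : finType) (F : I -> R[i]) :
  complex.Re (\sum_i F i) = \sum_i complex.Re (F i).
Proof. exact: (big_morph _ ReD). Qed.

Lemma ReM_real (a : R) z : complex.Re (a%:C * z) = a * complex.Re z.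
Proof. by case: z => x y /=; rewrite mul0r subr0. Qed.

Lemma conjC_real (a : R) : (a%:C)^* = a%:C :> R[i].
Proof. by apply/eqP; rewrite eq_complex /= oppr0 !eqxx. Qed.

Lemma Re_conj z : complex.Re z^* = complex.Re z.
Proof. by case: z. Qed.

Lemma conjC_mul_self z :
  z^* * z = (complex.Re z ^+ 2 + complex.Im z ^+ 2)%:C.
Proof.
by case: z => x y; apply/eqP; rewrite eq_complex /=; apply/andP; split; apply/eqP; ring.
Qed.

End ComplexRe.

Section InnerProduct.
Variables (R : realType) (m n : nat).
Local Notation C := R[i].
Implicit Types (u v w : 'M[C]_(m, n)) (c : C).

Lemma innerABDl u v w : innerAB (u + v) w = innerAB u w + innerAB v w.
Proof.
rewrite /innerAB -big_split; apply: eq_bigr => i _.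
by rewrite -big_split; apply: eq_bigr => j _; rewrite !mxE rmorphD mulrDl.
Qed.

Lemma innerABDr u v w : innerAB w (u + v) = innerAB w u + innerAB w v.
Proof.
rewrite /innerAB -big_split; apply: eq_bigr => i _.
by rewrite -big_split; apply: eq_bigr => j _; rewrite !mxE mulrDr.
Qed.

Lemma innerABZl c u w : innerAB (c *: u) w = c^* * innerAB u w.
Proof.
rewrite /innerAB mulr_sumr; apply: eq_bigr => i _.
by rewrite mulr_sumr; apply: eq_bigr => j _; rewrite !mxE rmorphM mulrA.
Qed.

Lemma innerABZr c u w : innerAB u (c *: w) = c * innerAB u w.
Proof.
rewrite /innerAB mulr_sumr; apply: eq_bigr => i _.
by rewrite mulr_sumr; apply: eq_bigr => j _; rewrite !mxE mulrCA.
Qed.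

Lemma innerABC u v : innerAB v u = (innerAB u v)^*.
Proof.
rewrite /innerAB rmorph_sum; apply: eq_bigr => i _.
by rewrite rmorph_sum; apply: eq_bigr => j _; rewrite rmorphM /= conjCK mulrC.
Qed.

Lemma innerAB_selfE u :
  innerAB u u = (\sum_i \sum_j (complex.Re (u i j) ^+ 2 + complex.Im (u i j) ^+ 2))%:C.
Proof.
rewrite !rmorph_sum; apply: eq_bigr => i _.
by rewrite rmorph_sum; apply: eq_bigr => j _; rewrite conjC_mul_self.
Qed.

Lemma innerAB_real u : innerAB u u = (complex.Re (innerAB u u))%:C.
Proof. by rewrite innerAB_selfE. Qed.

Lemma Re_innerAB_ge0 u : 0 <= complex.Re (innerAB u u).
Proof.
rewrite innerAB_selfE /= sumr_ge0 // => i _.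
by rewrite sumr_ge0 // => j _; rewrite addr_ge0 ?sqr_ge0.
Qed.

Lemma Re_innerAB_addZ (a : R) u v :
  complex.Re (innerAB (u + a%:C *: v) (u + a%:C *: v)) =
  complex.Re (innerAB u u) + a ^+ 2 * complex.Re (innerAB v v)
  + 2 * a * complex.Re (innerAB u v).
Proof.
rewrite !innerABDl !innerABDr !innerABZl !innerABZr conjC_real (innerABC v u).
by rewrite !ReD !ReM_real Re_conj; ring.
Qed.

Lemma Re_innerAB_lbound (a : R) u v :
  - (a ^+ 2 * complex.Re (innerAB u u) + complex.Re (innerAB v v))
    <= 2 * a * complex.Re (innerAB u v).
Proof.
have := Re_innerAB_ge0 (v + a%:C *: u).
by rewrite Re_innerAB_addZ (innerABC v u) Re_conj; lra.
Qed.

Lemma innerAB_add_orth u v :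
  innerAB u v = 0 -> innerAB (u + v) (u + v) = innerAB u u + innerAB v v.
Proof.
move=> uv0; rewrite innerABDl !innerABDr uv0 (innerABC u v) uv0 conjC0.
by rewrite addr0 add0r.
Qed.

End InnerProduct.

Lemma innerAE (R : realType) n (u v : 'rV[R[i]]_n) : innerA u v = innerAB u v.
Proof. by rewrite /innerAB big_ord1. Qed.

Section Tensor.
Variables (R : realType) (dA dB : nat).
Local Notation C := R[i].
Implicit Types (p : 'rV[C]_dA) (b : 'rV[C]_dB) (v : 'M[C]_(dA, dB)).

Lemma innerAB_tensl p b v : innerAB (tens p b) v = innerA p (contrB b v).
Proof.
apply: eq_bigr => i _; rewrite !mxE mulr_sumr.
by apply: eq_bigr => j _; rewrite !mxE rmorphM; ring.
Qed.

Lemma contrB_tens p b : innerA b b = 1 -> contrB b (tens p b) = p.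
Proof.
move=> b_unit; apply/rowP => i; rewrite !mxE.
under eq_bigr do rewrite mxE mulrCA.
by rewrite -mulr_sumr -/(innerA b b) b_unit mulr1.
Qed.

Lemma contrB_residual b v :
  innerA b b = 1 -> contrB b (v - tens (contrB b v) b) = 0.
Proof.
move=> b_unit; apply/rowP => i; set x := contrB b v.
have -> : contrB b (v - tens x b) 0 i = x 0 i - contrB b (tens x b) 0 i.
  by rewrite !mxE -sumrB; apply: eq_bigr => j _; rewrite !mxE mulrBr.
by rewrite contrB_tens // !mxE subrr.
Qed.

Lemma innerA0r n (p : 'rV[C]_n) : innerA p 0 = 0.
Proof. by rewrite /innerA big1 // => i _; rewrite mxE mulr0. Qed.

Lemma innerAB_tens_residual p b v :
  innerA b b = 1 -> innerAB (tens p b) (v - tens (contrB b v) b) = 0.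
Proof. by move=> b_unit; rewrite innerAB_tensl contrB_residual // innerA0r. Qed.

Lemma innerA_mulmx b (w : 'rV[C]_dA) v :
  innerA b (w *m v) = \sum_i w 0 i * contrB b v 0 i.
Proof.
rewrite /innerA.
under eq_bigr do rewrite mxE mulr_sumr.
rewrite exchange_big; apply: eq_bigr => i _; rewrite !mxE mulr_sumr.
by apply: eq_bigr => j _; ring.
Qed.

End Tensor.

Section PartialTrace.
Variable R : realType.
Local Notation C := R[i].
Local Open Scope sesquilinear_scope.

Lemma ptraceBE m n (v : 'M[C]_(m, n)) : ptraceB v = v *m v^t*.
Proof. by apply/matrixP => i k; rewrite !mxE; apply: eq_bigr => j _; rewrite !mxE. Qed.

Lemma ptraceB_normal m n (v : 'M[C]_(m, n)) : ptraceB v \is normalmx.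
Proof. by apply/normalmxP; rewrite ptraceBE trmx_mul map_mxM trmxCK. Qed.

Lemma ptraceB_quad m n (v : 'M[C]_(m, n)) (w : 'rV[C]_m) :
  (w *m ptraceB v *m w^t*) 0 0 = innerA (w *m v) (w *m v).
Proof.
rewrite ptraceBE !mulmxA -mulmxA -map_mxM -trmx_mul mxE.
by apply: eq_bigr => j _; rewrite !mxE mulrC.
Qed.

End PartialTrace.

Lemma exists_ge_of_weighted_sum (R : realDomainType) (I : finType) (f g : I -> R) (c : R) :
  (forall i, 0 <= g i) -> 0 < \sum_i g i -> c * \sum_i g i <= \sum_i g i * f i ->
  exists i, c <= f i.
Proof.
move=> g_ge0 sum_gt0 c_le.
have [i0 _] : exists i0 : I, true.
  case: (pickP (fun _ : I => true)) => [i0 _ | I0]; first by exists i0.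
  by move: sum_gt0; rewrite big_pred0 ?ltxx.
case: (arg_maxP f (isT : predT i0)) => k _ f_le_k; exists k.
rewrite -(ler_pM2r sum_gt0) (le_trans c_le) // [leRHS]mulrC mulr_suml.
by apply: ler_sum => i _; apply: ler_wpM2l; [exact: g_ge0 | exact: f_le_k].
Qed.

Section Rayleigh.
Variable R : rcfType.
Local Notation C := R[i].
Local Open Scope sesquilinear_scope.

Lemma spectral_quad n (M : 'M[C]_n) (w : 'rV[C]_n) : M \is normalmx ->
  let z := w *m (spectralmx M)^t* in
  (w *m M *m w^t*) 0 0 = \sum_i ((z 0 i)^* * z 0 i) * spectral_diag M 0 i /\
  (w *m w^t*) 0 0 = \sum_i (z 0 i)^* * z 0 i.
Proof.
move=> /orthomx_spectralP M_diag z.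
have P_unitary := spectral_unitarymx M.
have Pz : spectralmx M *m w^t* = z^t* by rewrite /z trmx_mul map_mxM trmxCK.
split.
  rewrite {1}M_diag invmx_unitary // !mulmxA -/z -!mulmxA Pz mulmxA -/z mulmxA mul_mx_diag mxE.
  by apply: eq_bigr => i _; rewrite !mxE; ring.
rewrite -{1}(mulmxKtV w P_unitary (erefl _)) -/z -mulmxA Pz mxE.
by apply: eq_bigr => i _; rewrite !mxE mulrC.
Qed.

Lemma exists_spectral_diag_ge n (M : 'M[C]_n) (w : 'rV[C]_n) (c : R) :
  M \is normalmx -> 0 < complex.Re ((w *m w^t*) 0 0) ->
  c * complex.Re ((w *m w^t*) 0 0) <= complex.Re ((w *m M *m w^t*) 0 0) ->
  exists k, c <= complex.Re (spectral_diag M 0 k).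
Proof.
move=> M_normal; have [-> ->] := spectral_quad w M_normal.
set z := w *m _; rewrite !Re_sum.
pose g i := complex.Re (z 0 i) ^+ 2 + complex.Im (z 0 i) ^+ 2.
have gE i : (z 0 i)^* * z 0 i = (g i)%:C by exact: conjC_mul_self.
under eq_bigr do rewrite gE.
under [X in _ -> _ <= X -> _]eq_bigr do rewrite gE ReM_real.
by apply: exists_ge_of_weighted_sum => i; rewrite addr_ge0 ?sqr_ge0.
Qed.

End Rayleigh.

Lemma renyi_le_ln_inv (R : realType) n (rho : 'M[R[i]]_n) (alpha c : R) k :
  1 < alpha -> 0 < c -> c <= complex.Re (spectral_diag rho 0 k) ->
  renyi alpha rho <= alpha / (alpha - 1) * ln c^-1.
Proof.
move=> alpha_gt1 c_gt0 c_le.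
have alpha_ge0 : 0 <= alpha by lra.
have trpow_ge : c `^ alpha <= trpow rho alpha.
  rewrite /trpow (bigD1 k) //= -[leLHS]addr0 lerD ?sumr_ge0 // => [|i _]; last exact: powR_ge0.
  apply: ge0_ler_powR => //; rewrite nnegrE ltW //.
  exact: lt_le_trans c_gt0 c_le.
have -> : alpha / (alpha - 1) * ln c^-1 = (1 - alpha)^-1 * ln (c `^ alpha).
  rewrite ln_powR lnV ?posrE //; field.
  by rewrite !subr_eq0 lt_eqF // gt_eqF.
apply: ler_wnM2l; first by rewrite invr_le0 subr_le0 ltW.
rewrite ler_ln ?posrE ?powR_gt0 //.
exact: lt_le_trans (powR_gt0 _ _) trpow_ge.
Qed.

Section PerturbedState.
Variables (R : realType) (dA dB : nat).
Variables (a0 : 'rV[R[i]]_dA) (b0 : 'rV[R[i]]_dB) (phi : 'M[R[i]]_(dA, dB)) (eps : R).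
Hypotheses (a0_unit : innerA a0 a0 = 1) (b0_unit : innerA b0 b0 = 1).
Hypotheses (phi_unit : innerAB phi phi = 1) (eps_gt0 : 0 < eps) (eps_lt1 : eps < 1).

Local Notation ket0 := (tens a0 b0).
Local Notation x := (contrB b0 phi).
Local Notation y := (phi - tens x b0).
Local Notation N := (1 + eps ^+ 2 + 2 * eps * complex.Re (innerAB ket0 phi)).
Local Notation psi := (((Num.sqrt N)^-1)%:C *: (ket0 + eps%:C *: phi)).
Local Notation mu := (eps ^+ 2 * complex.Re (innerAB y y) / N).
Local Notation u := (a0 + eps%:C *: x).
Local Notation w := (\row_i (u 0 i)^*).
Local Notation X := (complex.Re (innerA x x)).
Local Notation Y := (complex.Re (innerAB y y)).
Local Notation U := (complex.Re (innerA u u)).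
Local Notation p := (complex.Re (innerA a0 x)).

Lemma phi_pythagoras : X + Y = 1.
Proof.
have := innerAB_add_orth (@innerAB_tens_residual _ _ _ x b0 phi b0_unit).
rewrite addrC subrK phi_unit innerAB_tensl contrB_tens // => /(congr1 (@complex.Re R)).
by rewrite ReD.
Qed.

Lemma N_E : N = 1 + eps ^+ 2 + 2 * eps * p.
Proof. by rewrite innerAB_tensl. Qed.

Lemma U_E : U = 1 + eps ^+ 2 * X + 2 * eps * p.
Proof. by rewrite !innerAE Re_innerAB_addZ -!innerAE a0_unit. Qed.

Lemma N_decomp : N = U + eps ^+ 2 * Y.
Proof. by rewrite N_E U_E -(addrK Y X) phi_pythagoras; ring. Qed.

Lemma X_le1 : X <= 1.
Proof. by rewrite -phi_pythagoras lerDl Re_innerAB_ge0. Qed.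

(* [2 p >= -(1 + X)] from [|a0 + x|^2 >= 0], hence [U >= (1 - eps) (1 - eps X)]. *)
Lemma U_gt0 : 0 < U.
Proof.
have : 0 < (1 - eps) * (1 - eps * X).
  by apply: mulr_gt0; move: X_le1 eps_gt0 eps_lt1; nra.
have := Re_innerAB_lbound 1 a0 x; rewrite -!innerAE a0_unit expr1n mul1r mulr1 /=.
rewrite U_E; move: eps_gt0; nra.
Qed.

(* [2 eps p >= -(eps^2 + X)] from [|x + eps a0|^2 >= 0], hence [N >= 1 - X = Y]. *)
Lemma Y_le_N : Y <= N.
Proof.
rewrite N_E; have := phi_pythagoras.
have := Re_innerAB_lbound eps a0 x; rewrite -!innerAE a0_unit /= mulr1; lra.
Qed.

Lemma N_gt0 : 0 < N.
Proof.
rewrite N_decomp (lt_le_trans U_gt0) // lerDl mulr_ge0 ?Re_innerAB_ge0 //.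
by rewrite exprn_ge0 // ltW.
Qed.

Lemma mu_le_eps2 : mu <= eps ^+ 2.
Proof. by rewrite ler_pdivrMr ?N_gt0 // ler_wpM2l ?Y_le_N // exprn_ge0 // ltW. Qed.

Lemma one_sub_mu : 1 - mu = U / N.
Proof.
have UE : U = N - eps ^+ 2 * Y by rewrite N_decomp addrK.
by rewrite UE; field; exact: lt0r_neq0 N_gt0.
Qed.

Lemma one_sub_mu_gt0 : 0 < 1 - mu.
Proof. by rewrite one_sub_mu divr_gt0 ?U_gt0 ?N_gt0. Qed.

Lemma conj_row_psi :
  w *m psi = ((Num.sqrt N)^-1)%:C *: (U%:C *: b0 + eps%:C *: (w *m y)).
Proof.
have UE : U%:C = \sum_i w 0 i * u 0 i.
  by rewrite innerAE -innerAB_real /innerAB big_ord1; apply: eq_bigr => i _; rewrite mxE.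
apply/rowP => j; rewrite !mxE UE mulr_suml mulr_sumr -big_split mulr_sumr.
by apply: eq_bigr => i _; rewrite /= !mxE; ring.
Qed.

Local Open Scope sesquilinear_scope.

Lemma rhoA_quad :
  complex.Re ((w *m ptraceB psi *m w^t*) 0 0) =
  (U ^+ 2 + eps ^+ 2 * complex.Re (innerAB (w *m y) (w *m y))) / N.
Proof.
have b0_orth : innerAB b0 (w *m y) = 0.
  by rewrite -innerAE innerA_mulmx contrB_residual // big1 // => i _; rewrite !mxE mulr0.
have sqr_s : (Num.sqrt N)^-1 * (Num.sqrt N)^-1 = N^-1.
  by rewrite -expr2 exprVn sqr_sqrtr // ltW // N_gt0.
rewrite (ptraceB_quad psi w) conj_row_psi innerAE innerABZl innerABZr conjC_real !ReM_real.
rewrite mulrA sqr_s Re_innerAB_addZ !innerABZl !innerABZr conjC_real b0_orth.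
by rewrite -innerAE b0_unit !ReM_real /=; ring.
Qed.

Lemma rhoA_spectral_ge :
  exists k, 1 - mu <= complex.Re (spectral_diag (ptraceB psi) 0 k).
Proof.
have w_norm : (w *m w^t*) 0 0 = U%:C.
  rewrite innerAE -innerAB_real mxE /innerAB big_ord1; apply: eq_bigr => i _.
  by rewrite !mxE conjCK mulrC.
have w_pos : 0 < complex.Re ((w *m w^t*) 0 0) by rewrite w_norm U_gt0.
have rayleigh_ge : (1 - mu) * complex.Re ((w *m w^t*) 0 0)
                   <= complex.Re ((w *m ptraceB psi *m w^t*) 0 0).
  rewrite w_norm one_sub_mu rhoA_quad mulrAC -expr2 ler_pM2r ?invr_gt0 ?N_gt0 //.
  by rewrite lerDl mulr_ge0 ?Re_innerAB_ge0 // exprn_ge0 // ltW.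
exact: exists_spectral_diag_ge (ptraceB_normal psi) w_pos rayleigh_ge.
Qed.

End PerturbedState.

Theorem mainTheorem1 (R : realType) (dA dB : nat)
  (a0 : 'rV[R[i]]_dA) (b0 : 'rV[R[i]]_dB) (phi : 'M[R[i]]_(dA, dB)) (eps : R) :
  innerA a0 a0 = 1 -> innerA b0 b0 = 1 -> innerAB phi phi = 1 ->
  0 < eps -> eps < 1 ->
  let ket0 := tens a0 b0 in
  let x := contrB b0 phi in
  let y := phi - tens x b0 in
  let N := 1 + eps ^+ 2 + 2 * eps * complex.Re (innerAB ket0 phi) in
  let psi := ((Num.sqrt N)^-1)%:C *: (ket0 + eps%:C *: phi) in
  let rhoA := ptraceB psi in
  let mu := eps ^+ 2 * complex.Re (innerAB y y) / N in
  mu <= eps ^+ 2 /\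
  forall alpha : R, 1 < alpha ->
    renyi alpha rhoA <= alpha / (alpha - 1) * ln ((1 - mu)^-1) /\
    alpha / (alpha - 1) * ln ((1 - mu)^-1)
      <= alpha / (alpha - 1) * ln ((1 - eps ^+ 2)^-1).
Proof.
move=> a0_unit b0_unit phi_unit eps_gt0 eps_lt1 ket0 x y N psi rhoA mu.
have mu_le : mu <= eps ^+ 2 := mu_le_eps2 a0_unit b0_unit phi_unit eps_gt0 eps_lt1.
have mu_lt1 : 0 < 1 - mu := one_sub_mu_gt0 a0_unit b0_unit phi_unit eps_gt0 eps_lt1.
have [k mu_le_k] := rhoA_spectral_ge a0_unit b0_unit phi_unit eps_gt0 eps_lt1.
split=> // alpha alpha_gt1; split; first exact: renyi_le_ln_inv alpha_gt1 mu_lt1 mu_le_k.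
have coef_gt0 : 0 < alpha / (alpha - 1) by rewrite divr_gt0 ?subr_gt0 //; lra.
have eps2_lt1 : 0 < 1 - eps ^+ 2 by rewrite subr_gt0 expr_lt1 ?ltW.
by rewrite ler_pM2l // ler_ln ?posrE ?invr_gt0 // lef_pV2 ?posrE // lerB.
Qed.
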